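(* Let $I\subseteq\{1,\dots,n\}$. Then the barycenter of the standard parabolic face $F_I$ (i.e. of the weights in $F_I$) is of the form $\sum_{i\in I}a_i\tilde\omega_i$ where the $a_i$ are non-negative rational numbers.
   Context: Let $\mathfrak g$ be a finite-dimensional complex simple Lie algebra with root system $\Phi$, base $\Pi=\{\alpha_1,\dots,\alpha_n\}$, Weyl group $W$; $E$ is the real span of $\Pi$ with $W$-invariant inner product $(\cdot,\cdot)$. Let $\omega_i$ be the fundamental weights and $\tilde\omega_i=2\omega_i/(\alpha_i,\alpha_i)$, so $(\tilde\omega_i,\alpha_j)=\delta_{ij}$. Fix a dominant integral weight $\lambda=\sum_i m_i\alpha_i$ and let $P(\lambda)$ be the set of weights of the irreducible module of highest weight $\lambda$; $\mathbf P=\mathrm{conv}(W\lambda)$. For $I\subseteq\{1,\dots,n\}$, $P_I=\{\mu\in P(\lambda)\mid(\mu,\tilde\omega_i)=m_i\ \forall i\in I\}$ and $F_I=\{x\in\mathbf P\mid (x,\tilde\omega_i)=m_i\ \forall i\in I\}$; $P_I$ is the set of weights in $F_I$, and the barycenter of $F_I$ is $\frac{1}{|P_I|}\sum_{\mu\in P_I}\mu$. *)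

From HB Require Import structures.
From mathcomp Require Import all_boot all_order all_algebra.
Set Implicit Arguments. Unset Strict Implicit. Unset Printing Implicit Defensive.
Import Order.TTheory GRing.Theory Num.Theory.
Local Open Scope ring_scope.

Section RootData.
Variables (R : realFieldType) (n : nat).
Implicit Types (B : 'M[R]_n) (x y lam mu : 'rV[R]_n).

(* A vector x : 'rV_n stands for sum_i x_i alpha_i in E.  B is the Gram matrix
   B i j = (alpha_i, alpha_j) of the W-invariant inner product. *)
Definition ip B x y : R := (x *m B *m y^T) 0 0.

Definition alpha (i : 'I_n) : 'rV[R]_n := delta_mx 0 i.

Definition copair B x (i : 'I_n) : R :=
  2 * ip B x (alpha i) / ip B (alpha i) (alpha i).

Definition sref B (i : 'I_n) x : 'rV[R]_n := x - copair B x i *: alpha i.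

(* action of the Weyl group element s_{i_1} ... s_{i_k} (W is generated by the
   simple reflections, so every w in W is of this form) *)
Definition wact B (s : seq 'I_n) x : 'rV[R]_n := foldr (sref B) x s.

Definition isNatR (r : R) : Prop := exists k : nat, r = k%:R.

(* tilde omega_i : the vector with (tilde omega_i, alpha_j) = delta_ij *)
Definition omegat B (i : 'I_n) : 'rV[R]_n := row i (invmx B).

(* B is the Gram matrix of a base of the root system of a finite-dimensional
   complex simple Lie algebra: symmetric, positive definite, Cartan integers
   2(alpha_i,alpha_j)/(alpha_j,alpha_j) are non-positive integers for i<>j,
   and the Dynkin diagram is connected (indecomposable). *)
Definition simple_cartan_gram B : Prop :=
  [/\ (0 < n)%N, B^T = B,
      (forall x, x != 0 -> 0 < ip B x x),
      (forall i j : 'I_n, i != j -> exists k : nat, copair B (alpha i) j = - k%:R)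
    & (forall J : {set 'I_n}, J != set0 -> J != setT ->
         exists i j, [/\ i \in J, j \notin J & B i j != 0])].

(* normalisation: the inner product takes rational values on the roots *)
Definition rational_gram B : Prop := forall i j, exists q : rat, B i j = ratr q.

Definition dominant_integral B lam : Prop := forall i, isNatR (copair B lam i).

(* mu in P(lam): the set of weights of the irreducible module of highest weight
   lam.  Described (Humphreys, 13.2 and 21.3) as the mu such that w mu <= lam in
   the dominance order for every w in W. *)
Definition weight_of B lam mu : Prop :=
  forall (s : seq 'I_n) (i : 'I_n), isNatR ((lam - wact B s mu) 0 i).

(* P_I = { mu in P(lam) | (mu, tilde omega_i) = m_i for all i in I },
   where lam = sum_i m_i alpha_i, i.e. m_i = lam 0 i. *)
Definition P_I B lam (I : {set 'I_n}) mu : Prop :=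
  weight_of B lam mu /\ (forall i, i \in I -> ip B mu (omegat B i) = lam 0 i).

End RootData.

(* A simple reflection s_j with j outside I fixes the coordinates m_i, i in I,
   and preserves P(lambda), so it permutes P_I; hence the sum S of P_I is fixed
   by s_j and (S, alpha_j) = 0.  Expanding S in the dual basis tilde omega_i,
   only the coefficients (S, alpha_i) with i in I survive.  Each of them is
   non-negative: for mu in P_I, lambda - mu is a non-negative integer
   combination of the alpha_k with k outside I, (alpha_k, alpha_i) <= 0 for
   k <> i, and (lambda, alpha_i) >= 0 by dominance.  They are rational because
   lambda - mu is integral and the Gram matrix is rational. *)
From HB Require Import structures.
From mathcomp Require Import all_boot all_order all_algebra ring.
Set Implicit Arguments. Unset Strict Implicit. Unset Printing Implicit Defensive.
Import Order.TTheory GRing.Theory Num.Theory.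
Local Open Scope ring_scope.

Section GramMatrix.
Variables (R : realFieldType) (n : nat) (B : 'M[R]_n).
Implicit Types (x y : 'rV[R]_n) (i j k : 'I_n).

Lemma ip_alpha x i : ip B x (alpha R i) = (x *m B) 0 i.
Proof. by rewrite /ip /alpha trmx_delta -colE mxE. Qed.

Lemma ip_alpha_alpha i j : ip B (alpha R i) (alpha R j) = B i j.
Proof. by rewrite ip_alpha /alpha -rowE mxE. Qed.

Lemma alpha_neq0 i : alpha R i != 0.
Proof. by apply/eqP => /matrixP/(_ 0 i)/eqP; rewrite !mxE !eqxx oner_eq0. Qed.

Lemma copairE x j : copair B x j = 2 * (x *m B) 0 j / B j j.
Proof. by rewrite /copair ip_alpha ip_alpha_alpha. Qed.

Lemma copairD x y j : copair B (x + y) j = copair B x j + copair B y j.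
Proof. by rewrite !copairE mulmxDl mxE; ring. Qed.

Lemma copairZ a x j : copair B (a *: x) j = a * copair B x j.
Proof. by rewrite !copairE -scalemxAl mxE; ring. Qed.

Lemma copair_alpha j : B j j != 0 -> copair B (alpha R j) j = 2.
Proof. by move=> Bjj; rewrite copairE -ip_alpha ip_alpha_alpha mulfK. Qed.

Lemma copair_sref x j : B j j != 0 -> copair B (sref B j x) j = - copair B x j.
Proof.
move=> Bjj; rewrite /sref copairD -scaleNr copairZ copair_alpha //; ring.
Qed.

Lemma sref_involutive j : B j j != 0 -> involutive (sref B j).
Proof. by move=> Bjj x; rewrite {1}/sref copair_sref // scaleNr opprK subrK. Qed.

Lemma srefD j : {morph sref B j : x y / x + y}.
Proof. by move=> x y; rewrite /sref copairD scalerDl opprD addrACA. Qed.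

Lemma sref0 j : sref B j 0 = 0.
Proof. by rewrite /sref -(scale0r (0 : 'rV_n)) copairZ mul0r !scale0r subr0. Qed.

Lemma sref_sum j (s : seq 'rV[R]_n) :
  sref B j (\sum_(mu <- s) mu) = \sum_(mu <- s) sref B j mu.
Proof. exact: (big_morph _ (srefD j) (sref0 j)). Qed.

Lemma sref_coord x i j : i != j -> sref B j x 0 i = x 0 i.
Proof. by move=> ij; rewrite !mxE (negbTE ij) andbF mulr0 subr0. Qed.

Lemma sref_fixed_ip_alpha x j :
  B j j != 0 -> sref B j x = x -> ip B x (alpha R j) = 0.
Proof.
move=> Bjj /eqP; rewrite /sref subr_eq addrC -subr_eq subrr eq_sym.
rewrite scaler_eq0 (negbTE (alpha_neq0 j)) orbF copairE ip_alpha.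
by rewrite !mulf_eq0 invr_eq0 (negbTE Bjj) pnatr_eq0 /= orbF => /eqP.
Qed.

Lemma unitmx_posdef : (forall x, x != 0 -> 0 < ip B x x) -> B \in unitmx.
Proof.
move=> pd; rewrite -row_free_unit; apply: inj_row_free => v vB.
by apply/eqP; apply: contraT => /pd; rewrite /ip vB mul0mx mxE ltxx.
Qed.

Hypothesis unitB : B \in unitmx.

Lemma ip_omegat x i : B^T = B -> ip B x (omegat B i) = x 0 i.
Proof.
move=> symB; rewrite /ip /omegat tr_row trmx_inv symB.
by rewrite colE mulmxA mulmxK // -colE mxE.
Qed.

Lemma omegat_expansion x : x = \sum_i (x *m B) 0 i *: omegat B i.
Proof.
apply/rowP => j; rewrite -{1}(mulmxK unitB x) mulmx_sum_row summxE.
by apply: eq_bigr => i _; rewrite !mxE.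
Qed.

End GramMatrix.

Section Rationals.
Variable R : realFieldType.

Definition rational (r : R) : Prop := exists q : rat, r = ratr q.

Lemma rational_nat k : rational k%:R.
Proof. by exists k%:R; rewrite ratr_nat. Qed.

Lemma rationalD x y : rational x -> rational y -> rational (x + y).
Proof. by move=> [p ->] [q ->]; exists (p + q); rewrite rmorphD. Qed.

Lemma rationalB x y : rational x -> rational y -> rational (x - y).
Proof. by move=> [p ->] [q ->]; exists (p - q); rewrite rmorphB. Qed.

Lemma rationalM x y : rational x -> rational y -> rational (x * y).
Proof. by move=> [p ->] [q ->]; exists (p * q); rewrite rmorphM. Qed.

Lemma rationalV x : rational x -> rational x^-1.
Proof. by move=> [p ->]; exists p^-1; rewrite fmorphV. Qed.

Lemma rational_sum (I : Type) (r : seq I) (P : pred I) (F : I -> R) :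
  (forall i, P i -> rational (F i)) -> rational (\sum_(i <- r | P i) F i).
Proof.
move=> ratF; apply: big_ind => //; last exact: rationalD.
by exists 0; rewrite rmorph0.
Qed.

End Rationals.

Section Weights.
Variables (R : realFieldType) (n : nat) (B : 'M[R]_n) (lam : 'rV[R]_n).
Implicit Types (mu : 'rV[R]_n) (i j k : 'I_n).

Lemma weight_of_sref mu j : weight_of B lam mu -> weight_of B lam (sref B j mu).
Proof. by move=> W s i; have := W (rcons s j) i; rewrite /wact -cats1 foldr_cat. Qed.

Lemma P_I_sref (I : {set 'I_n}) mu j : B^T = B -> B \in unitmx ->
  j \notin I -> P_I B lam I mu -> P_I B lam I (sref B j mu).
Proof.
move=> symB unitB jI [W E]; split; first exact: weight_of_sref.
move=> i iI; rewrite ip_omegat // sref_coord; first by rewrite -(E i iI) ip_omegat.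
by apply: contraNneq jI => <-.
Qed.

Lemma gram_offdiag_le0 k i : (forall j, 0 < B j j) ->
  (forall k l, k != l -> exists m : nat, copair B (alpha R k) l = - m%:R) ->
  k != i -> B k i <= 0.
Proof.
move=> Bdiag cart /cart[m cartm]; have Bii := Bdiag i.
have -> : B k i = copair B (alpha R k) i * B i i / 2.
  by rewrite copairE -ip_alpha ip_alpha_alpha; field; rewrite gt_eqF.
by rewrite cartm !mulNr oppr_le0 divr_ge0 // mulr_ge0 // ltW.
Qed.

Lemma weight_gram_coord mu i : B i i != 0 -> (mu *m B) 0 i =
  copair B lam i * B i i / 2 - \sum_k (lam - mu) 0 k * B k i.
Proof.
move=> Bii; have -> : copair B lam i * B i i / 2 = (lam *m B) 0 i.
  by rewrite copairE; field.
have -> : \sum_k (lam - mu) 0 k * B k i = ((lam - mu) *m B) 0 i by rewrite mxE.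
by rewrite mulmxBl !mxE opprB addrC subrK.
Qed.

Lemma weight_gram_coord_rational mu i : B i i != 0 ->
  rational_gram B -> dominant_integral B lam -> weight_of B lam mu ->
  rational ((mu *m B) 0 i).
Proof.
move=> Bii ratB dom W; rewrite weight_gram_coord //.
have ratB' k l : rational (B k l) by have [q ->] := ratB k l; exists q.
have [m ->] := dom i; apply: rationalB.
  exact: rationalM (rationalM (rational_nat _ m) (ratB' i i))
                   (rationalV (rational_nat _ 2)).
apply: rational_sum => k _; have [d ->] : isNatR ((lam - mu) 0 k) := W [::] k.
exact: rationalM (rational_nat _ d) (ratB' k i).
Qed.

Lemma P_I_gram_coord_ge0 (I : {set 'I_n}) mu i :
  B^T = B -> B \in unitmx -> (forall j, 0 < B j j) ->
  (forall k l, k != l -> B k l <= 0) -> dominant_integral B lam ->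
  i \in I -> P_I B lam I mu -> 0 <= (mu *m B) 0 i.
Proof.
move=> symB unitB Bdiag Boff dom iI [W E].
rewrite weight_gram_coord ?gt_eqF // subr_ge0 (@le_trans _ _ 0) //.
  apply: sumr_le0 => k _; have [->|ki] := eqVneq k i.
    by rewrite !mxE -(E i iI) ip_omegat // subrr mul0r.
  have [d ->] : isNatR ((lam - mu) 0 k) := W [::] k.
  by rewrite mulr_ge0_le0 ?Boff.
by have [m ->] := dom i; rewrite divr_ge0 // mulr_ge0 // ltW.
Qed.

End Weights.

Lemma perm_eq_map_closed (T : eqType) (f : T -> T) (s : seq T) :
  uniq s -> injective f -> {subset map f s <= s} -> perm_eq (map f s) s.
Proof.
move=> us injf fs; have ufs : uniq (map f s) by rewrite map_inj_uniq.
by apply: uniq_perm => //; apply: (uniq_min_size ufs fs _).2; rewrite size_map.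
Qed.

Theorem lemma4p10 (R : realFieldType) (n : nat) (B : 'M[R]_n)
    (lam : 'rV[R]_n) (I : {set 'I_n}) (s : seq 'rV[R]_n) :
  simple_cartan_gram B -> rational_gram B -> dominant_integral B lam ->
  uniq s -> (forall mu, mu \in s <-> P_I B lam I mu) ->
  exists a : 'I_n -> rat,
    (forall i, i \in I -> 0 <= a i) /\
    (size s)%:R^-1 *: \sum_(mu <- s) mu = \sum_(i in I) ratr (a i) *: omegat B i.
Proof.
move=> [_ symB pd cart _] ratB dom us Es.
have unitB := unitmx_posdef pd.
have Bdiag i : 0 < B i i by rewrite -ip_alpha_alpha pd ?alpha_neq0.
have Boff k i : k != i -> B k i <= 0 by exact: gram_offdiag_le0.
set b := _ *: _.
have coord_b i : (b *m B) 0 i = (size s)%:R^-1 * \sum_(mu <- s) (mu *m B) 0 i.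
  by rewrite -scalemxAl mulmx_suml mxE summxE.
have b_outside j : j \notin I -> (b *m B) 0 j = 0.
  move=> jI; have Bjj := lt0r_neq0 (Bdiag j).
  have perm_s : perm_eq (map (sref B j) s) s.
    apply: perm_eq_map_closed => //; first exact: inv_inj (sref_involutive Bjj).
    by move=> _ /mapP[mu /Es Pmu ->]; apply/Es; apply: P_I_sref.
  rewrite -scalemxAl mxE -ip_alpha sref_fixed_ip_alpha ?mulr0 //.
  by rewrite sref_sum -[RHS](perm_big _ perm_s) big_map.
have b_inside i : exists q : rat, i \in I -> (b *m B) 0 i = ratr q.
  have [iI|] := boolP (i \in I); last by exists 0.
  suff [q ->] : rational ((b *m B) 0 i) by exists q.
  rewrite coord_b; apply: rationalM; first exact/rationalV/rational_nat.
  rewrite big_seq; apply: rational_sum => mu /Es [W _].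
  exact: weight_gram_coord_rational (lt0r_neq0 (Bdiag i)) ratB dom W.
have [a Ea] := fin_all_exists b_inside.
exists a; split.
  move=> i iI; rewrite -(ler0q R) -Ea // coord_b mulr_ge0 ?invr_ge0 //.
  rewrite big_seq sumr_ge0 // => mu /Es.
  exact: P_I_gram_coord_ge0 symB unitB Bdiag Boff dom iI.
rewrite {1}(omegat_expansion unitB b) (bigID (mem I)) /= addrC big1 ?add0r.
  by apply: eq_bigr => i iI; rewrite Ea.
by move=> j jI; rewrite b_outside // scale0r.
Qed.
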